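(* Let $\mathcal{X}$ be a class of abelian groups with $\mathcal{B}\subseteq\mathcal{X}\subseteq\mathcal{H}$. Then $\mathcal{X}^s=\mathcal{B}^s$, i.e., a group $G$ is in $\mathcal{X}^s$ if and only if $G$ is super Bassian. In particular, a group is super Hopfian if and only if it is super Bassian.
   Context: All groups are abelian; a class is closed under isomorphism. $\mathcal{B}$: Bassian groups ($G$ Bassian iff there is no nonzero $H\le G$ with an injective homomorphism $G\to G/H$). $\mathcal{H}$: Hopfian groups ($G\not\cong G/H$ for every nonzero subgroup $H$). For a class $\mathcal{X}$, $\mathcal{X}^s=\{G\in\mathcal{X}:\text{every epimorphic image of }G\text{ is in }\mathcal{X}\}$; super Bassian means in $\mathcal{B}^s$, super Hopfian means in $\mathcal{H}^s$. *)

From HB Require Import structures.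
From mathcomp Require Import all_boot all_algebra.
Set Implicit Arguments. Unset Strict Implicit. Unset Printing Implicit Defensive.
Import GRing.Theory.
Local Open Scope ring_scope.

Definition surj (A B : Type) (f : A -> B) : Prop := forall y, exists x, f x = y.

Definition iso_grp (G H : zmodType) : Prop :=
  exists f : {additive G -> H}, bijective f.

Definition iso_closed (X : zmodType -> Prop) : Prop :=
  forall G H : zmodType, iso_grp G H -> X G -> X H.

Definition epi_image (G Q : zmodType) : Prop :=
  exists p : {additive G -> Q}, surj p.

(* A quotient G/H with H a nonzero subgroup is represented (up to isomorphism)
   by a surjective homomorphism p : G -> Q with nonzero kernel, i.e. p not
   injective (Q ~ G / ker p). *)

Definition Bassian (G : zmodType) : Prop :=
  forall (Q : zmodType) (p : {additive G -> Q}), surj p -> ~ injective p ->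
    ~ exists f : {additive G -> Q}, injective f.

Definition Hopfian (G : zmodType) : Prop :=
  forall (Q : zmodType) (p : {additive G -> Q}), surj p -> ~ injective p ->
    ~ iso_grp G Q.

Definition super (X : zmodType -> Prop) (G : zmodType) : Prop :=
  X G /\ forall Q : zmodType, epi_image G Q -> X Q.

From HB Require Import structures.
From mathcomp Require Import all_boot all_algebra.
From mathcomp Require Import generic_quotient ring_quotient.
From mathcomp Require Import boolp classical_sets.
Set Implicit Arguments. Unset Strict Implicit. Unset Printing Implicit Defensive.
Import GRing.Theory.
Local Open Scope ring_scope.

(* Since Bassian groups are Hopfian, everything reduces to: if every epimorphic
   image of G is Hopfian, then G is Bassian.  Let p : G ->> Q have a nonzero
   kernel and f : G -> Q be injective.  Lifting along p^-1 f from some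
   0 != h in ker p gives a_0 = h, p a_(k+1) = f a_k.  If h has infinite order
   the a_k are independent and their images in G / 2<a_k> differ by elements of
   order 2; if ker p is torsion we may take h of prime order q, and then every
   a_k - a_j has a nonzero multiple of order q.  In both cases, factoring out a
   subgroup maximal with respect to meeting the q-socle trivially leaves an
   infinite q-group in which the a_k stay distinct.  An infinite q-group Q has
   a non-Hopfian image: if Q = T + qQ for a finitely generated, hence finite,
   T then Q/T is a nonzero q-divisible q-group, on which multiplication by q
   is onto but not injective; otherwise Q maps onto the F_q-space F_q[X],
   on which dropping the constant term is onto but not injective. *)

Definition is_subgroup (G : zmodType) (S : G -> Prop) :=
  S 0 /\ forall x y, S x -> S y -> S (x - y).

Section Subgroup.
Variables (G : zmodType) (S : G -> Prop).
Hypothesis subS : is_subgroup S.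

Lemma subgroup0 : S 0. Proof. by case: subS. Qed.

Lemma subgroupB x y : S x -> S y -> S (x - y). Proof. by case: subS => _; apply. Qed.

Lemma subgroupN x : S x -> S (- x).
Proof. by move=> Sx; rewrite -sub0r; apply: subgroupB => //; apply: subgroup0. Qed.

Lemma subgroupD x y : S x -> S y -> S (x + y).
Proof. by move=> Sx Sy; rewrite -[y]opprK; apply/subgroupB/subgroupN. Qed.

Lemma subgroupMn x n : S x -> S (x *+ n).
Proof.
move=> Sx; elim: n => [|n IH]; first by rewrite mulr0n; apply: subgroup0.
by rewrite mulrS; apply: subgroupD.
Qed.

Lemma subgroupMz x k : S x -> S (x *~ k).
Proof.
case: k => n Sx; first by rewrite -pmulrn; apply: subgroupMn.
by rewrite NegzE mulrNz -pmulrn; apply/subgroupN/subgroupMn.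
Qed.

Lemma subgroup_absz x k : S (x *~ k) -> S (x *+ `|k|%N).
Proof.
case: k => n; first by rewrite -pmulrn.
by rewrite NegzE mulrNz -pmulrn => /subgroupN; rewrite opprK.
Qed.

Definition subgroup_pred : {pred G} := fun x => `[< S x >].

Lemma subgroup_pred_zmod_closed : zmod_closed subgroup_pred.
Proof.
split=> [|x y /asboolP Sx /asboolP Sy]; apply/asboolP; first exact: subgroup0.
exact: subgroupB.
Qed.

HB.instance Definition _ :=
  GRing.isZmodClosed.Build G subgroup_pred subgroup_pred_zmod_closed.

Lemma quotient_exists : exists (Q : zmodType) (pi : {additive G -> Q}),
  surj pi /\ forall x, pi x = 0 <-> S x.
Proof.
pose pi : {additive G -> Quotient.quot subgroup_pred} := \pi%qT.
exists (Quotient.quot subgroup_pred), pi; split=> [y|x].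
  by exists (repr y); apply: reprK.
have -> : S x = (x \in subgroup_pred) by rewrite unfold_in asboolE.
by rewrite -[x]subr0 Quotient.idealrBE subr0 (raddf0 pi); split=> /eqP.
Qed.

End Subgroup.

Section MaximalAvoiding.
Local Open Scope classical_set_scope.
Variables (G : zmodType) (B W : set G).

Definition avoiding (A : set G) :=
  [/\ is_subgroup A, B `<=` A & forall x, A x -> W x -> B x].

Lemma avoiding_bigcup (F : set (set G)) X0 :
  (forall X, F X -> X = set0 \/ avoiding X) ->
  total_on F subset -> F X0 -> X0 <> set0 -> avoiding (\bigcup_(X in F) X).
Proof.
move=> FP Ftot FX0 X0n.
have Fav X x : F X -> X x -> avoiding X.
  by move=> FX Xx; case: (FP X FX) => // Xe; rewrite Xe in Xx.
have [[A0 _] BX0 _] : avoiding X0 by case: (FP X0 FX0).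
split=> [|x Bx|x [X FX Xx] Wx]; last 2 first.
- by exists X0 => //; apply: BX0.
- by have [_ _] := Fav X x FX Xx; apply.
split=> [|x y [X FX Xx] [Y FY Yy]]; first by exists X0.
have [[_ subX] _ _] := Fav X x FX Xx; have [[_ subY] _ _] := Fav Y y FY Yy.
have [XY|YX] := Ftot X Y FX FY; [exists Y => //; apply: subY (XY _ Xx) Yy |].
by exists X => //; apply: subX Xx (YX _ Yy).
Qed.

Lemma maximal_subgroup_avoiding : is_subgroup B ->
  exists M, avoiding M /\
    forall x, ~ M x -> exists a k, [/\ M a, W (a + x *~ k) & ~ B (a + x *~ k)].
Proof.
move=> subB.
(* set0 is admitted only because it is the union of the empty chain. *)
have [M [PM maxM]] : exists M, (M = set0 \/ avoiding M) /\
    forall C, M `<` C -> ~ (C = set0 \/ avoiding C).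
  apply: Zorn_bigcup => F FP Ftot.
  have [F0|/existsNP [X0 /not_implyP [FX0 X0n]]] :=
    pselect (forall X, F X -> X = set0).
    by left; apply/seteqP; split=> // x [X /F0 -> //].
  by right; apply: (avoiding_bigcup FP Ftot FX0).
have {PM}avM : avoiding M.
  case: PM => // M0; exfalso; apply: (maxM B); last by right; split.
  by rewrite M0; split=> // /(_ 0 (proj1 subB)).
exists M; split=> // x Mx; apply: contrapT => noW.
have [[M0 subM] BM MWB] := avM.
pose C y := exists a k, M a /\ y = a + x *~ k.
have MC a : M a -> C a by exists a, 0; rewrite mulr0z addr0.
apply: (maxM C); last right.
  split=> [a /MC //|/(_ x) MxC]; apply: Mx; apply: MxC.
  by exists 0, 1; rewrite add0r mulr1z.
split=> [|y /BM /MC //|_ [a [k [Ma ->]]] Wy]; last first.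
  by apply: contrapT => nB; apply: noW; exists a, k.
split=> [|_ _ [a [k [Ma ->]]] [b [l [Mb ->]]]]; first exact: MC.
exists (a - b), (k - l); split; first exact: subM.
by rewrite mulrzBr opprD addrACA.
Qed.

End MaximalAvoiding.

Definition has_nonHopfian_image (G : zmodType) := exists R, epi_image G R /\ ~ Hopfian R.

Lemma epi_image_trans (A B C : zmodType) :
  epi_image A B -> epi_image B C -> epi_image A C.
Proof.
move=> [f sf] [g sg]; exists (g \o f : {additive A -> C}) => z.
by have [y <-] := sg z; have [x <-] := sf y; exists x.
Qed.

Lemma has_nonHopfian_image_trans (G Q : zmodType) :
  epi_image G Q -> has_nonHopfian_image Q -> has_nonHopfian_image G.
Proof. by move=> GQ [R [QR nR]]; exists R; split=> //; apply: epi_image_trans QR. Qed.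

Lemma Bassian_Hopfian (G : zmodType) : Bassian G -> Hopfian G.
Proof.
move=> BG Q p sp nip [f [g fK _]]; apply: (BG Q p sp nip).
by exists f; apply: can_inj fK.
Qed.

Lemma surj_noninj_endo_not_Hopfian (R : zmodType) (e : {additive R -> R}) :
  surj e -> ~ injective e -> ~ Hopfian R.
Proof. by move=> se nie hR; apply: (hR R e se nie); exists idfun; exists idfun. Qed.

Definition natmul_fun (R : zmodType) (n : nat) (x : R) := x *+ n.

Lemma natmul_fun_is_zmod_morphism (R : zmodType) n : zmod_morphism (@natmul_fun R n).
Proof. by move=> x y; rewrite /natmul_fun mulrnBl. Qed.

HB.instance Definition _ (R : zmodType) n := GRing.isZmodMorphism.Build R R
  (@natmul_fun R n) (@natmul_fun_is_zmod_morphism R n).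

Lemma divisible_torsion_not_Hopfian (R : zmodType) (n : nat) (w : R) :
  (forall y : R, exists x, x *+ n = y) -> w != 0 -> w *+ n = 0 -> ~ Hopfian R.
Proof.
move=> ndiv w0 wn.
apply: (@surj_noninj_endo_not_Hopfian _ (@natmul_fun R n : {additive R -> R})) => // inj.
by move/eqP: w0; apply; apply: inj; rewrite /= /natmul_fun wn mul0rn.
Qed.

Lemma poly_not_Hopfian (R : nzRingType) : ~ Hopfian {poly R}.
Proof.
apply: (@surj_noninj_endo_not_Hopfian _ (drop_poly 1)).
  by move=> P; exists (P * 'X^1); rewrite /= drop_polyMXn_id.
move=> /(_ 1 0) /=; rewrite drop_poly0r drop_poly_eq0 ?size_poly1 // => /(_ erefl) /eqP.
by rewrite oner_eq0.
Qed.

Lemma coprimez_Bezout (a b : int) : coprimez a b -> exists u v, u * a + v * b = 1.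
Proof. by move=> /eqP ab1; have [u [v uv]] := Bezoutz a b; exists u, v; rewrite uv ab1. Qed.

Lemma prime_coprimez (q : nat) (d : int) :
  prime q -> ~~ (q%:Z %| d)%Z -> coprimez d q%:Z.
Proof. by move=> pq; rewrite coprimezE coprime_sym prime_coprime // -dvdzE. Qed.

Lemma coprime_mulrn_eq0 (G : zmodType) (x : G) (m n : nat) :
  coprime m n -> x *+ m = 0 -> x *+ n = 0 -> x = 0.
Proof.
move=> cmn xm xn; have [u [v uv]] : exists u v, u * m%:Z + v * n%:Z = 1.
  by apply: coprimez_Bezout; rewrite coprimezE.
by rewrite -[x]mulr1z -uv mulrzDr ![_ * _%:Z]mulrC !mulrzA -!pmulrn xm xn !mul0rz addr0.
Qed.

Lemma mulrz_absz_eq0 (G : zmodType) (x : G) (k : int) : x *~ k = 0 -> x *+ `|k|%N = 0.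
Proof.
case: k => n; first by rewrite -pmulrn.
by rewrite NegzE mulrNz -pmulrn => /eqP; rewrite oppr_eq0 => /eqP.
Qed.

Lemma mulrz_modz (G : zmodType) (x : G) (N : nat) (d : int) :
  (0 < N)%N -> x *+ N = 0 -> x *~ d = x *+ `|(d %% N%:Z)%Z|%N.
Proof.
move=> N0 xN; rewrite {1}(divz_eq d N%:Z) mulrzDr mulrC mulrzA -pmulrn xN mul0rz add0r.
by rewrite pmulrn gez0_abs // modz_ge0 // eqz_nat -lt0n.
Qed.

Lemma exists_qpower_order_q (G : zmodType) (q e : nat) (z : G) :
  z != 0 -> z *+ q ^ e = 0 -> exists i, z *+ q ^ i != 0 /\ z *+ q ^ i *+ q = 0.
Proof.
move=> z0; elim: e => [|e IH]; first by rewrite expn0 mulr1n => z0'; rewrite z0' eqxx in z0.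
have [/IH //|ze ze1] := eqVneq (z *+ q ^ e) 0.
by exists e; rewrite -mulrnA -expnSr.
Qed.

Lemma exists_prime_order_multiple (G : zmodType) (z : G) (N : nat) :
  z != 0 -> (0 < N)%N -> z *+ N = 0 ->
  exists q m, [/\ prime q, z *+ m != 0 & z *+ m *+ q = 0].
Proof.
move=> z0; elim/ltn_ind: N => N IH N0 zN.
have N1 : (1 < N)%N.
  rewrite ltn_neqAle eq_sym N0 andbT; apply: contra_neq z0 => N1.
  by rewrite -zN N1 mulr1n.
have pN := pdiv_prime N1; have NE := divnK (pdiv_dvd N).
have [zN'|zN'] := eqVneq (z *+ (N %/ pdiv N)%N) 0.
  apply: (IH (N %/ pdiv N)%N _ _ zN'); first by rewrite ltn_Pdiv // prime_gt1.
  by rewrite divn_gt0 ?prime_gt0 // dvdn_leq // pdiv_dvd.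
by exists (pdiv N), (N %/ pdiv N)%N; rewrite -mulrnA NE.
Qed.

Section LinearCombination.
Variables (Q : zmodType) (w : nat -> Q).

Definition lincomb k (d : nat -> int) := \sum_(i < k) w i *~ d i.

Definition trunc_coef k (d : nat -> int) i : int := if (i < k)%N then d i else 0.

Definition in_span_mod (q : nat) k x := exists d y, x = lincomb k d + y *+ q.

Definition in_even_span x := exists k d, x = lincomb k (fun i => d i * 2).

Lemma eq_lincomb k d d' : (forall i, d i = d' i) -> lincomb k d = lincomb k d'.
Proof. by move=> dd'; apply: eq_bigr => i _; rewrite dd'. Qed.

Lemma lincomb0 k : lincomb k (fun=> 0) = 0.
Proof. by rewrite /lincomb big1 // => i _; rewrite mulr0z. Qed.

Lemma lincombB k d d' : lincomb k (fun i => d i - d' i) = lincomb k d - lincomb k d'.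
Proof. by rewrite /lincomb -sumrB; apply: eq_bigr => i _; rewrite mulrzBr. Qed.

Lemma lincombN k d : lincomb k (fun i => - d i) = - lincomb k d.
Proof. by rewrite /lincomb -sumrN; apply: eq_bigr => i _; rewrite mulrNz. Qed.

Lemma lincombMz k d u : lincomb k d *~ u = lincomb k (fun i => d i * u).
Proof. by rewrite /lincomb mulrz_suml; apply: eq_bigr => i _; rewrite mulrzA. Qed.

Lemma lincombS k d : lincomb k.+1 d = lincomb k d + w k *~ d k.
Proof. by rewrite /lincomb big_ord_recr. Qed.

Lemma lincomb_widen k K d : (k <= K)%N -> lincomb k d = lincomb K (trunc_coef k d).
Proof.
move=> kK; rewrite /lincomb (big_ord_widen _ (fun i => w i *~ d i) kK) big_mkcond.
by apply: eq_bigr => i _; rewrite /trunc_coef; case: ifP; rewrite ?mulr0z.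
Qed.

Lemma lincomb_delta k N : (k < N)%N -> lincomb N (fun i => (i == k)%:Z) = w k.
Proof.
move=> kN; rewrite /lincomb (bigD1 (Ordinal kN)) //= eqxx mulr1z big1 ?addr0 //.
by move=> i /eqP ik; case: eqP => [ik'|]; [case: ik; apply: val_inj | rewrite mulr0z].
Qed.

Lemma lincomb_finite k N : (0 < N)%N -> (forall i, (i < k)%N -> w i *+ N = 0) ->
  exists L : seq Q, forall d, lincomb k d \in L.
Proof.
move=> N0 wN; pose r (d : nat -> int) i := `|(d i %% N%:Z)%Z|%N.
have r_lt d (i : 'I_k) : (r d i < N)%N.
  by rewrite -ltz_nat gez0_abs ?ltz_pmod ?modz_ge0 // ?ltz_nat // eqz_nat -lt0n.
exists (codom (fun g : {ffun 'I_k -> 'I_N} => \sum_(i < k) w i *+ g i)) => d.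
apply/codomP; exists [ffun i => Ordinal (r_lt d i)].
by apply: eq_bigr => i _; rewrite ffunE; apply: mulrz_modz => //; apply: wN.
Qed.

Lemma in_even_span_subgroup : is_subgroup in_even_span.
Proof.
split=> [|_ _ [n [d ->]] [n' [d' ->]]]; first by exists 0%N, (fun=> 0); rewrite lincomb0.
exists (maxn n n'), (fun i => trunc_coef n d i - trunc_coef n' d' i).
rewrite (lincomb_widen _ (leq_maxl n n')) (lincomb_widen _ (leq_maxr n n')) -lincombB.
by apply: eq_lincomb => i; rewrite /trunc_coef; do 2 case: ifP; rewrite ?mulrBl ?mul0r.
Qed.

End LinearCombination.

Lemma lincomb_nth_mkseq (Q : zmodType) (w : nat -> Q) k d :
  lincomb (nth 0 (mkseq w k)) k d = lincomb w k d.
Proof. by apply: eq_bigr => i _; rewrite nth_mkseq. Qed.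

Lemma injective_not_in_seq (T : eqType) (c : nat -> T) (L : seq T) :
  injective c -> exists k, c k \notin L.
Proof.
move=> injc; apply: contrapT => /forallNP allL.
have sub : {subset mkseq c (size L).+1 <= L}.
  by move=> _ /mapP [k _ ->]; apply/negPn/negP/allL.
have := uniq_leq_size _ sub.
by rewrite size_mkseq ltnn map_inj_uniq ?iota_uniq // => /(_ isT).
Qed.

Lemma dependent_choice_seq (T : Type) (P : seq T -> T -> Prop) :
  (forall s, exists x, P s x) -> exists w : nat -> T, forall k, P (mkseq w k) (w k).
Proof.
move=> next; pose nxt s := proj1_sig (cid (next s)).
pose fix build k := if k is k'.+1 then rcons (build k') (nxt (build k')) else [::].
exists (fun k => nxt (build k)) => k.
suff <- : build k = mkseq (fun k => nxt (build k)) k by apply: (proj2_sig (cid _)).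
by elim: k => // k IH; rewrite mkseqS -IH.
Qed.

Definition is_pgroup (Q : zmodType) (q : nat) := forall x : Q, exists e, x *+ q ^ e = 0.

Lemma pgroup_common_exponent (Q : zmodType) (q : nat) (w : nat -> Q) k :
  is_pgroup Q q -> exists E, forall i, (i < k)%N -> w i *+ q ^ E = 0.
Proof.
move=> pgQ; elim: k => [|k [E wE]]; first by exists 0%N.
have [e we] := pgQ (w k); exists (E + e)%N => i; rewrite ltnS leq_eqVlt.
case/orP=> [/eqP ->|/wE wiE]; first by rewrite expnD mulnC mulrnA we mul0rn.
by rewrite expnD mulrnA wiE mul0rn.
Qed.

(* The span T of w 0, ..., w (k - 1) is finite while Q is not, and Q = T + qQ
   makes Q/T q-divisible. *)
Lemma pgroup_spanned_mod_nonHopfian_image (Q : zmodType) (q : nat) (w c : nat -> Q) k :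
  prime q -> is_pgroup Q q -> injective c -> (forall x, in_span_mod w q k x) ->
  has_nonHopfian_image Q.
Proof.
move=> pq pgQ injc spanQ; pose T x := exists d, x = lincomb w k d.
have subT : is_subgroup T.
  split=> [|_ _ [d ->] [d' ->]]; first by exists (fun=> 0); rewrite lincomb0.
  by exists (fun i => d i - d' i); rewrite lincombB.
have [E wE] := pgroup_common_exponent w k pgQ.
have qE0 : (0 < q ^ E)%N by rewrite expn_gt0 prime_gt0.
have [L TL] := lincomb_finite qE0 wE.
have [j /negP cjT] := injective_not_in_seq L injc.
have [R [pi [spi kpi]]] := quotient_exists subT.
exists R; split; first by exists pi.
have cj0 : pi (c j) != 0 by apply/eqP => /kpi [d cjE]; apply: cjT; rewrite cjE TL.
have [e cje] := pgQ (c j).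
have [i [cji0 cjiq]] : exists i, pi (c j) *+ q ^ i != 0 /\ pi (c j) *+ q ^ i *+ q = 0.
  by apply: (@exists_qpower_order_q _ q e _ cj0); rewrite -raddfMn cje raddf0.
apply: (divisible_torsion_not_Hopfian _ cji0 cjiq) => y.
have [x <-] := spi y; have [d [z ->]] := spanQ x; rewrite raddfD raddfMn.
have -> : pi (lincomb w k d) = 0 by apply/kpi; exists d.
by exists (pi z); rewrite add0r.
Qed.

Definition is_multiple (Q : zmodType) (q : nat) (x : Q) := exists y, x = y *+ q.

Lemma is_multiple_subgroup (Q : zmodType) (q : nat) : is_subgroup (@is_multiple Q q).
Proof.
split=> [|_ _ [y ->] [z ->]]; first by exists 0; rewrite mul0rn.
by exists (y - z); rewrite mulrnBl.
Qed.

Lemma Fp_intr_eq (q : nat) (a b : int) :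
  prime q -> (q%:Z %| a - b)%Z -> (a%:~R : 'F_q) = b%:~R.
Proof.
move=> pq /dvdzP [t abE]; rewrite -(subrK b a) abE intrD intrM.
by rewrite (_ : q%:Z%:~R = 0 :> 'F_q) ?mulr0 ?add0r //; apply: pchar_Fp_0.
Qed.

Lemma subrACA (G : zmodType) (a b c d : G) : (a - b) - (c - d) = (a - c) - (b - d).
Proof. by rewrite !opprB addrACA [- b + _]addrC -addrACA. Qed.

Lemma subrBB (G : zmodType) (x a b : G) : (x - b) - (x - a) = a - b.
Proof. by rewrite opprB addrC addrA subrK. Qed.

Section PolyCoordinates.
Variables (Q : zmodType) (q : nat) (w : nat -> Q).
Hypotheses (pq : prime q) (w_indep : forall k, ~ in_span_mod w q k (w k)).

(* If q does not divide the last coefficient, inverting it modulo q puts w k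
   into the span of its predecessors modulo qQ. *)
Lemma lincomb_multiple_dvdz k d y :
  lincomb w k d = y *+ q -> forall i, (i < k)%N -> (q%:Z %| d i)%Z.
Proof.
elim: k d y => [//|k IH] d y; rewrite lincombS => dyE i.
have [/dvdzP [t dkE]|ndk] := boolP (q%:Z %| d k)%Z.
  have dyE' : lincomb w k d = (y - w k *~ t) *+ q.
    by rewrite mulrnBl -dyE dkE mulrzA -pmulrn addrK.
  rewrite ltnS leq_eqVlt => /orP [/eqP ->|]; last exact: IH _ _ dyE' i.
  by apply/dvdzP; exists t.
have [u [v uv]] := coprimez_Bezout (prime_coprimez pq ndk).
exfalso; apply: (@w_indep k); exists (fun i => - (d i * u)), (y *~ u + w k *~ v).
rewrite lincombN -lincombMz (_ : lincomb w k d = y *+ q - w k *~ d k); last first.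
  by rewrite -dyE addrK.
rewrite !pmulrn mulrzBl opprB mulrzDl -!mulrzA [u * q%:Z]mulrC addrA subrK.
by rewrite -mulrzDr [d k * u]mulrC uv mulr1z.
Qed.

(* Q/M is an F_q-space with basis the images of the w k; poly_coord reads off
   the coordinates of x as the coefficients of a polynomial. *)
Variables (M : Q -> Prop).
Hypotheses (subM : is_subgroup M) (multiple_M : forall x, is_multiple q x -> M x)
  (M_span : forall x, M x -> (exists k, in_span_mod w q k x) -> is_multiple q x)
  (M_max : forall x, ~ M x -> exists a k,
     [/\ M a, exists K, in_span_mod w q K (a + x *~ k) & ~ is_multiple q (a + x *~ k)]).

Lemma lincomb_mod_exists x : exists kd : nat * (nat -> int), M (x - lincomb w kd.1 kd.2).
Proof.
have [Mx|nMx] := pselect (M x).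
  by exists (0%N, fun=> 0); rewrite lincomb0 subr0.
have [a [k [Ma [K [D [y axE]]] nmul]]] := M_max nMx.
have [/dvdzP [t kE]|ndk] := boolP (q%:Z %| k)%Z.
  case: nmul; apply: M_span; last by exists K, D, y.
  apply: subgroupD => //; apply: multiple_M.
  by exists (x *~ t); rewrite kE mulrzA -pmulrn.
have [u [v uv]] := coprimez_Bezout (prime_coprimez pq ndk).
exists (K, fun i => D i * u) => /=.
have -> : x - lincomb w K (fun i => D i * u) =
    x *~ (v * q%:Z) + (x *~ k - lincomb w K D) *~ u.
  rewrite -lincombMz mulrzBl -mulrzA addrA -mulrzDr.
  by rewrite [v * _ + _]addrC [k * u]mulrC uv mulr1z.
have -> : x *~ k - lincomb w K D = y *+ q - a.
  by rewrite -(addKr a (x *~ k)) axE addrCA addrAC subrr add0r addrC.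
apply: (subgroupD subM); first by apply: multiple_M; exists (x *~ v); rewrite mulrzA pmulrn.
apply: (subgroupMz subM); apply: (subgroupB subM) => //.
by apply: multiple_M; exists y.
Qed.

Definition coef_rep x : nat * (nat -> int) := proj1_sig (cid (lincomb_mod_exists x)).

Lemma coef_repP x : M (x - lincomb w (coef_rep x).1 (coef_rep x).2).
Proof. exact: (proj2_sig (cid (lincomb_mod_exists x))). Qed.

Definition poly_coord x : {poly 'F_q} :=
  \poly_(i < (coef_rep x).1) ((coef_rep x).2 i)%:~R.

Lemma lincomb_mod_dvdz x k d k' d' : M (x - lincomb w k d) -> M (x - lincomb w k' d') ->
  forall i, (q%:Z %| trunc_coef k d i - trunc_coef k' d' i)%Z.
Proof.
set K := maxn k k'; rewrite (lincomb_widen w d (leq_maxl k k')).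
rewrite (lincomb_widen w d' (leq_maxr k k')) -/K => Mx Mx' i.
set D := fun i => trunc_coef k d i - trunc_coef k' d' i.
have [y yE] : is_multiple q (lincomb w K D).
  apply: M_span; last by exists K, D, 0; rewrite mul0rn addr0.
  by rewrite lincombB -(subrBB x); apply: subgroupB.
have [iK|Ki] := ltnP i K; first exact: lincomb_multiple_dvdz yE i iK.
by rewrite /trunc_coef !ifF ?subrr ?dvdz0 //; apply/negbTE; rewrite -leqNgt;
  apply: leq_trans Ki; rewrite ?leq_maxl ?leq_maxr.
Qed.

Lemma poly_coordE x k d : M (x - lincomb w k d) -> poly_coord x = \poly_(i < k) (d i)%:~R.
Proof.
move=> Mx; apply/polyP => j; rewrite !coef_poly.
have trE k' d' : (if (j < k')%N then (d' j)%:~R else 0) = (trunc_coef k' d' j)%:~R :> 'F_q.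
  by rewrite /trunc_coef; case: ifP.
by rewrite !trE; apply: Fp_intr_eq => //; apply: lincomb_mod_dvdz (coef_repP x) Mx j.
Qed.

Lemma poly_coord_is_zmod_morphism : zmod_morphism poly_coord.
Proof.
move=> x y; case: (coef_rep x) (coef_repP x) => k d /= Mx.
case: (coef_rep y) (coef_repP y) => k' d' /= My; set K := maxn k k'.
rewrite (lincomb_widen w d (leq_maxl k k')) in Mx.
rewrite (lincomb_widen w d' (leq_maxr k k')) in My.
have Mxy : M ((x - y) - lincomb w K (fun i => trunc_coef k d i - trunc_coef k' d' i)).
  by rewrite lincombB subrACA; apply: subgroupB.
rewrite (poly_coordE Mxy) (poly_coordE Mx) (poly_coordE My); apply/polyP => j.
by rewrite coefB !coef_poly; case: ifP => _; rewrite ?intrB ?subr0.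
Qed.

HB.instance Definition _ :=
  GRing.isZmodMorphism.Build Q {poly 'F_q} poly_coord poly_coord_is_zmod_morphism.

Lemma poly_coord_surj : surj poly_coord.
Proof.
move=> P; pose d (i : nat) := Posz (nat_of_ord (P`_i : 'F_q)).
exists (lincomb w (size P) d); rewrite (@poly_coordE _ (size P) d).
  rewrite -[RHS]coefK; apply/polyP => j; rewrite !coef_poly.
  by case: ifP => // _; apply: natr_Zp.
by rewrite subrr; apply: (subgroup0 subM).
Qed.

Lemma has_nonHopfian_poly_image : has_nonHopfian_image Q.
Proof.
exists {poly 'F_q}; split; last exact: poly_not_Hopfian.
by exists poly_coord; apply: poly_coord_surj.
Qed.

End PolyCoordinates.

Lemma independent_mod_nonHopfian_image (Q : zmodType) (q : nat) (w : nat -> Q) :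
  prime q -> (forall k, ~ in_span_mod w q k (w k)) -> has_nonHopfian_image Q.
Proof.
move=> pq w_indep.
have [M [[subM multM M_span] M_max]] :=
  maximal_subgroup_avoiding (fun x => exists k, in_span_mod w q k x) (is_multiple_subgroup Q q).
exact: (has_nonHopfian_poly_image pq w_indep subM multM M_span M_max).
Qed.

Lemma infinite_pgroup_nonHopfian_image (Q : zmodType) (q : nat) (c : nat -> Q) :
  prime q -> is_pgroup Q q -> injective c -> has_nonHopfian_image Q.
Proof.
move=> pq pgQ injc.
have [[w [k spanQ]]|nspan] := pselect (exists (w : nat -> Q) k, forall x, in_span_mod w q k x).
  exact: (pgroup_spanned_mod_nonHopfian_image pq pgQ injc spanQ).
have [w wP] : exists w : nat -> Q,
    forall k, ~ in_span_mod (nth 0 (mkseq w k)) q (size (mkseq w k)) (w k).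
  apply: (@dependent_choice_seq Q (fun s x => ~ in_span_mod (nth 0 s) q (size s) x)) => s.
  apply: contrapT => /forallNP span_s; apply: nspan.
  by exists (nth 0 s), (size s) => x; apply: contrapT; apply: span_s.
apply: (@independent_mod_nonHopfian_image _ q w pq) => k [d [y wkE]]; apply: (wP k).
by exists d, y; rewrite size_mkseq lincomb_nth_mkseq.
Qed.

Definition meets_socle (G : zmodType) (q : nat) (x : G) :=
  exists n, x *+ n != 0 /\ x *+ n *+ q = 0.

Section SocleAvoiding.
Variables (G : zmodType) (q : nat) (M : G -> Prop).
Hypotheses (pq : prime q) (subM : is_subgroup M)
  (M_socle : forall x, M x -> x *+ q = 0 -> x = 0)
  (M_max : forall x, ~ M x ->
     exists a k, [/\ M a, (a + x *~ k) *+ q = 0 & a + x *~ k <> 0]).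

Lemma meets_socle_notin x : meets_socle q x -> ~ M x.
Proof. by move=> [n [xn0 xnq]] /(subgroupMn subM n) /M_socle /(_ xnq) /eqP; apply/negP. Qed.

(* Maximality gives x *~ (k * q) in M with k != 0; write |k q| = m q^e with m
   prime to q.  If x *+ q^e were not in M, maximality would give a nonzero s
   with s *+ q = 0 and s *+ m in M, hence s *+ m = 0, hence s = 0. *)
Lemma quotient_is_pgroup x : exists e, M (x *+ q ^ e).
Proof.
have [Mx|nMx] := pselect (M x); first by exists 0%N; rewrite expn0 mulr1n.
have [a [k [Ma sq s0]]] := M_max nMx.
have k0 : k != 0.
  by apply: contra_notN s0 => /eqP k0; apply: M_socle; rewrite k0 mulr0z addr0 in sq *.
have Mxkq : M (x *~ (k * q%:Z)).
  rewrite mulrzA -[x *~ k](addKr a) mulrzDl -!pmulrn sq addr0 mulNrn.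
  exact/(subgroupN subM)/(subgroupMn subM).
have N0 : (0 < absz (k * q%:Z)%R)%N.
  by rewrite absz_gt0 mulf_neq0 // eqz_nat -lt0n prime_gt0.
have [m cqm NE] := pfactor_coprime pq N0.
have := subgroup_absz subM Mxkq; rewrite NE mulnC mulrnA; set t := x *+ _ => Mtm.
exists (logn q (absz (k * q%:Z)%R)); rewrite -/t.
apply: contrapT => /M_max [a' [k' [Ma' s'q s'0]]]; apply: s'0.
apply: (coprime_mulrn_eq0 cqm s'q); apply: M_socle; last first.
  by rewrite -mulrnA mulnC mulrnA s'q mul0rn.
rewrite mulrnDl; apply: (subgroupD subM); first exact: subgroupMn.
by rewrite !pmulrn -mulrzA mulrC mulrzA -pmulrn; apply: subgroupMz.
Qed.

End SocleAvoiding.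

Lemma socle_sequence_nonHopfian_image (G : zmodType) (q : nat) (b : nat -> G) :
  prime q -> (forall j k, (j < k)%N -> meets_socle q (b k - b j)) ->
  has_nonHopfian_image G.
Proof.
move=> pq b_socle; have sub0 : is_subgroup (fun x : G => x = 0).
  by split=> // x y -> ->; rewrite subr0.
have [K [[subK _ K_socle] K_max]] :=
  maximal_subgroup_avoiding (fun x : G => x *+ q = 0) sub0.
have [R [pi [spi kpi]]] := quotient_exists subK.
apply: (has_nonHopfian_image_trans (ex_intro _ pi spi)).
apply: (@infinite_pgroup_nonHopfian_image _ q (pi \o b) pq).
  move=> y; have [x <-] := spi y; have [e Mxe] := quotient_is_pgroup pq subK K_socle K_max x.
  by exists e; rewrite -raddfMn; apply/kpi.
have neq j k : (j < k)%N -> pi (b k) <> pi (b j).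
  move=> jk pibE; apply: (meets_socle_notin subK K_socle (b_socle j k jk)).
  by apply/kpi; rewrite raddfB pibE subrr.
move=> j k /= pibE; case: (ltngtP j k) => // [jk|kj]; exfalso.
  exact: neq jk (esym pibE).
exact: neq kj pibE.
Qed.

Definition is_torsion (G : zmodType) (x : G) := exists N, (0 < N)%N /\ x *+ N = 0.

Lemma int_double_neq1 (x : int) : x * 2 != 1.
Proof.
apply/eqP => x2; have := congr1 (fun z : int => odd `|z|%N) x2.
by rewrite abszM /= oddM andbF.
Qed.

Section NonBassianWitness.
Variables (G Q : zmodType) (p f : {additive G -> Q}).
Hypotheses (p_surj : surj p) (f_inj : injective f).

Definition lift y := proj1_sig (cid (p_surj y)).

Lemma liftK y : p (lift y) = y.
Proof. exact: (proj2_sig (cid (p_surj y))). Qed.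

Fixpoint lift_seq (h : G) k := if k is k'.+1 then lift (f (lift_seq h k')) else h.

Lemma lift_seqS h k : p (lift_seq h k.+1) = f (lift_seq h k).
Proof. exact: liftK. Qed.

Lemma f_eq0 x : f x = 0 -> x = 0.
Proof. by move=> fx0; apply: f_inj; rewrite fx0 raddf0. Qed.

Variables (h : G).
Hypothesis ph : p h = 0.
Local Notation a := (lift_seq h).

Lemma p_lincomb_lift_seq n d : p (lincomb a n.+1 d) = f (lincomb a n (fun i => d i.+1)).
Proof.
rewrite /lincomb big_ord_recl raddfD raddfMz /= ph mul0rz add0r !raddf_sum.
by apply: eq_bigr => i _; rewrite !raddfMz /= lift_seqS.
Qed.

Lemma lift_seq_independent : (forall N, (0 < N)%N -> h *+ N != 0) ->
  forall n d, lincomb a n d = 0 -> forall i, (i < n)%N -> d i = 0.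
Proof.
move=> h_free; elim=> [//|n IH] d ad0.
have dS : forall i, (i < n)%N -> d i.+1 = 0.
  by apply: IH; apply: f_eq0; rewrite -p_lincomb_lift_seq ad0 raddf0.
have d0 : d 0%N = 0.
  move: ad0; rewrite /lincomb big_ord_recl big1 ?addr0 => [/= /mulrz_absz_eq0 hd0|i _].
    have [//|d00] := eqVneq (d 0%N) 0.
    by move: (h_free `|d 0%N|%N); rewrite absz_gt0 d00 hd0 eqxx => /(_ isT).
  by rewrite dS // mulr0z.
by case=> [|i] //; rewrite ltnS => /dS.
Qed.

Lemma lift_seq_mulrn_eq0 m i : a i *+ m = 0 -> h *+ m = 0.
Proof.
elim: i => [//|i IH] aim0; apply: IH; apply: f_eq0.
by rewrite raddfMn /= -lift_seqS -raddfMn aim0 raddf0.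
Qed.

Lemma lift_seq_sub_mulrn_eq0 m j k : (j < k)%N -> (a k - a j) *+ m = 0 -> h *+ m = 0.
Proof.
elim: j k => [|j IH] [//|k] jk akjm0.
  apply: (@lift_seq_mulrn_eq0 m k); apply: f_eq0.
  by rewrite raddfMn /= -lift_seqS -[p (a k.+1)]subr0 -ph -raddfB -raddfMn akjm0 raddf0.
apply: (IH k jk); apply: f_eq0.
by rewrite raddfMn raddfB /= -!lift_seqS -raddfB -raddfMn akjm0 raddf0.
Qed.

Lemma lift_seq_sub_notin_even_span j k : (forall N, (0 < N)%N -> h *+ N != 0) ->
  (j < k)%N -> ~ in_even_span a (a k - a j).
Proof.
move=> h_free jk [n [d akjE]].
set N := maxn n k.+1; have kN : (k < N)%N by rewrite leq_max ltnSn orbT.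
pose c i := (i == k)%:Z - (i == j)%:Z - trunc_coef n (fun i => d i * 2) i.
have c0 : lincomb a N c = 0.
  rewrite !lincombB !lincomb_delta ?(ltn_trans jk) // -lincomb_widen ?leq_maxl //.
  by rewrite -akjE subrr.
have := lift_seq_independent h_free c0 kN.
rewrite /c eqxx /trunc_coef eq_sym (ltn_eqF jk) subr0.
case: ifP => _ /eqP; rewrite ?subr0 ?oner_eq0 // subr_eq0 eq_sym.
by rewrite (negbTE (int_double_neq1 _)).
Qed.

Lemma free_kernel_nonHopfian_image :
  (forall N, (0 < N)%N -> h *+ N != 0) -> has_nonHopfian_image G.
Proof.
move=> h_free; have [R [pi [spi kpi]]] := quotient_exists (in_even_span_subgroup a).
apply: (has_nonHopfian_image_trans (ex_intro _ pi spi)).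
apply: (@socle_sequence_nonHopfian_image _ 2 (pi \o a)) => // j k jk; exists 1%N.
have pia2 i : pi (a i) *+ 2 = 0.
  rewrite -raddfMn; apply/kpi; exists i.+1, (fun t => (t == i)%:Z).
  by rewrite -lincombMz lincomb_delta.
split; last by rewrite mulr1n mulrnBl /= !pia2 subrr.
rewrite mulr1n /= -raddfB; apply/eqP => /kpi.
exact: lift_seq_sub_notin_even_span.
Qed.

Lemma lift_seq_torsion : (forall x, p x = 0 -> is_torsion x) -> forall i, is_torsion (a i).
Proof.
move=> ker_tor; elim=> [|i [M [M0 aiM]]]; first exact: ker_tor.
have [M' [M'0 aiM']] : is_torsion (a i.+1 *+ M).
  by apply: ker_tor; rewrite raddfMn lift_seqS -raddfMn aiM raddf0.
by exists (M * M')%N; rewrite muln_gt0 M0 M'0 mulrnA.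
Qed.

Lemma torsion_kernel_nonHopfian_image q : prime q -> h != 0 -> h *+ q = 0 ->
  (forall x, p x = 0 -> is_torsion x) -> has_nonHopfian_image G.
Proof.
move=> pq h0 hq /lift_seq_torsion a_tor.
apply: (@socle_sequence_nonHopfian_image _ q a pq) => j k jk.
have [N [N0 akjN]] : is_torsion (a k - a j).
  have [[N1 [N10 akN]] [N2 [N20 ajN]]] := (a_tor k, a_tor j).
  exists (N1 * N2)%N; rewrite muln_gt0 N10 N20 mulrnBl mulrnA akN mul0rn.
  by rewrite mulnC mulrnA ajN mul0rn subrr.
have [m cqm NE] := pfactor_coprime pq N0.
have akjm0 : (a k - a j) *+ m != 0.
  apply/eqP => /(lift_seq_sub_mulrn_eq0 jk) hm; move/eqP: h0; apply.
  exact: coprime_mulrn_eq0 cqm hq hm.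
have [|i [akji0 akjiq]] := @exists_qpower_order_q _ q (logn q N) _ akjm0.
  by rewrite -mulrnA -NE.
by exists (m * q ^ i)%N; rewrite mulrnA.
Qed.

End NonBassianWitness.

Lemma noninjective_kernel (G Q : zmodType) (p : {additive G -> Q}) :
  ~ injective p -> exists h, h != 0 /\ p h = 0.
Proof.
move=> p_ninj; apply: contrapT => /forallNP nker; apply: p_ninj => x y pxy.
apply/eqP; rewrite -subr_eq0; apply: contrapT => /negP xy0.
by apply: (nker (x - y)); rewrite raddfB pxy subrr.
Qed.

Lemma Bassian_of_Hopfian_images (G : zmodType) :
  (forall Q, epi_image G Q -> Hopfian Q) -> Bassian G.
Proof.
move=> hopf Q p p_surj p_ninj [f f_inj].
suff [R [GR nR]] : has_nonHopfian_image G by apply: nR; apply: hopf.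
have [h0 [h00 ph0]] := noninjective_kernel p_ninj.
have [[h [ph h_free]]|no_free] :=
  pselect (exists h, p h = 0 /\ forall N, (0 < N)%N -> h *+ N != 0).
  exact: (free_kernel_nonHopfian_image p_surj f_inj ph h_free).
have ker_tor x : p x = 0 -> is_torsion x.
  move=> px0; apply: contrapT => ntor; apply: no_free; exists x; split=> // N N0.
  by apply/eqP => xN; apply: ntor; exists N.
have [N [N0 h0N]] := ker_tor _ ph0.
have [q [m [pq h0m h0mq]]] := exists_prime_order_multiple h00 N0 h0N.
apply: (torsion_kernel_nonHopfian_image p_surj f_inj _ pq h0m h0mq ker_tor).
by rewrite raddfMn /= ph0 mul0rn.
Qed.

Lemma super_iff_super_Bassian (X : zmodType -> Prop) :
  (forall G, Bassian G -> X G) -> (forall G, X G -> Hopfian G) ->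
  forall G, super X G <-> super Bassian G.
Proof.
move=> BX XH G; split=> [[XG XQ]|[BG BQ]]; last by split=> [|Q /BQ]; apply: BX.
split=> [|Q GQ]; apply: Bassian_of_Hopfian_images => [R GR].
  exact/XH/XQ.
exact/XH/XQ/(epi_image_trans GQ).
Qed.

Theorem theorem5p6 :
  (forall X : zmodType -> Prop,
      iso_closed X ->
      (forall G : zmodType, Bassian G -> X G) ->
      (forall G : zmodType, X G -> Hopfian G) ->
      forall G : zmodType, super X G <-> super Bassian G)
  /\ (forall G : zmodType, super Hopfian G <-> super Bassian G).
Proof.
split=> [X _|]; first exact: super_iff_super_Bassian.
by apply: super_iff_super_Bassian => // G; apply: Bassian_Hopfian.
Qed.
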